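(* Let $P$ be a finite poset with height function $h$ and a unique minimum $\hat{0}$. Then $$\mathsf{Z}_{P,h}([0]_q)=q^{-h(\hat{0})}\big(1-\chi_{P\setminus\{\hat{0}\}}\big),$$ where $\chi_R=\sum_{k\ge1}(-1)^{k-1}\#\operatorname{Ch}_k(R)$ (so $\chi_\emptyset=0$). In particular, if $P$ also has a unique maximum $\hat{1}\neq\hat{0}$, then $\mathsf{Z}_{P,h}([0]_q)=0$.
   Context: $q$ is an indeterminate; $[n]_q=(q^n-1)/(q-1)$ (so $[0]_q=0$). A height function is $h:P\to\mathbb{N}$ with $h(x)<h(y)$ whenever $y$ covers $x$. $\operatorname{Ch}_k(R)$ is the set of strict chains $c_1<\cdots<c_k$ in $R$. For a tuple $a$ of $k$ distinct nonnegative integers, $\mathsf{E}_a\in\mathbb{Q}(q)[x]$ is the unique polynomial with $\mathsf{E}_a([n]_q)=\sum_{m\in\mathbb{N}^k,\sum m_i=n}q^{\sum a_im_i}$ for $n\ge0$. The $q$-Zeta polynomial is $\mathsf{Z}_{P,h}(x)=\sum_{k\ge1}\sum_{c\in\operatorname{Ch}_k(P)}q^{\sum_i h(c_i)}\mathsf{E}_{(h(c_1),\dots,h(c_k))}((x-[k+1]_q)/q^{k+1})$; it is the unique polynomial with $\mathsf{Z}_{P,h}([n]_q)=\sum_{e_1\le\cdots\le e_{n-1}}q^{\sum_j h(e_j)}$ for all $n\ge2$. *)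

From HB Require Import structures.
From mathcomp Require Import all_boot all_order all_algebra.
From Stdlib Require Import ClassicalEpsilon.
Set Implicit Arguments. Unset Strict Implicit. Unset Printing Implicit Defensive.
Import Order.TTheory GRing.Theory Num.Theory.
Local Open Scope ring_scope.

Definition Qq : fieldType := {fraction {poly rat}}.
Definition qv : Qq := FracField.tofrac ('X : {poly rat}).

Definition qint (n : nat) : Qq := (qv ^+ n - 1) / (qv - 1).

(* For a : seq nat (a tuple of length k = size a), the value
   sum_{m in N^k, sum m_i = n} q^{sum a_i m_i}.  Components m_i are <= n,
   so m ranges over (size a)-tuples in 'I_n.+1. *)
Definition Esum (a : seq nat) (n : nat) : Qq :=
  \sum_(m : (size a).-tuple 'I_n.+1 | \sum_(i < size a) (tnth m i : nat) == n)
     qv ^+ (\sum_(i < size a) nth 0%N a i * tnth m i).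

Definition E_spec (a : seq nat) (p : {poly Qq}) : Prop :=
  forall n : nat, p.[qint n] = Esum a n.

(* E_a : the (unique) polynomial with E_a([n]_q) = Esum a n for all n >= 0
   (chosen by classical choice; it exists and is unique when a has distinct entries). *)
Definition E (a : seq nat) : {poly Qq} :=
  epsilon (inhabits 0) (E_spec a).

Definition Ch (d : Order.disp_t) (P : finPOrderType d) (A : {pred P}) (k : nat)
  : {set k.-tuple P} :=
  [set t : k.-tuple P | sorted (fun x y => (x < y)%O) t && all (mem A) t].

Definition covers (d : Order.disp_t) (P : finPOrderType d) (x y : P) : bool :=
  (x < y)%O && [forall w : P, ~~ ((x < w)%O && (w < y)%O)].

Definition height_fun (d : Order.disp_t) (P : finPOrderType d) (h : P -> nat) : Prop :=
  forall x y : P, covers x y -> (h x < h y)%N.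

(* chi_R = sum_{k>=1} (-1)^{k-1} #Ch_k(R); chains have length <= #|P|. *)
Definition chi (d : Order.disp_t) (P : finPOrderType d) (A : {pred P}) : Qq :=
  \sum_(1 <= k < #|P|.+1) (-1) ^+ k.-1 * (#|Ch A k|)%:R.

Definition Zpoly (d : Order.disp_t) (P : finPOrderType d) (h : P -> nat) : {poly Qq} :=
  \sum_(1 <= k < #|P|.+1) \sum_(c in Ch (@predT P) k)
     (qv ^+ (\sum_(x <- c) h x)) *:
       (E (map h c) \Po (('X - (qint k.+1)%:P) * (qv ^- k.+1)%:P)).

(* For distinct exponents a_1, ..., a_k put x_i = q^(a_i).  Partial fractions
   for 1/prod_i (1 - x_i t) give Esum a n = h_n(x) = sum_i c_i x_i^n, and since
   q^n = 1 + (q - 1)[n]_q this exhibits E_a(y) = sum_i c_i (1 + (q - 1) y)^(a_i).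
   At y = ([0]_q - [k+1]_q)/q^(k+1) one has 1 + (q - 1) y = q^-(k+1), so E_a is
   evaluated through the extension n |-> sum_i c_i x_i^n of h_n to negative n.
   Running the recurrence h_(n+1)(x_0, x) = x_0 h_n(x_0, x) + h_(n+1)(x)
   backwards, this extension vanishes for -k < n < 0 and equals
   (-1)^(k-1)/(x_1...x_k) * sum_i 1/x_i at n = -(k+1).  Heights along a chain
   are distinct, so every chain c contributes (-1)^(k-1) sum_(x in c) q^-h(x)
   to Z([0]_q).  Sorting the chains of P by whether they contain the minimum
   makes this alternating sum telescope to q^-h(0) (1 - chi(P - 0)).  The same
   cone argument shows chi = 1 on any poset with a minimum; applied to the dual
   of P - 0, whose minimum is the maximum of P, it gives the second claim. *)

From mathcomp Require Import all_boot all_order all_algebra ring.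
From Stdlib Require Import ClassicalEpsilon.
Set Implicit Arguments. Unset Strict Implicit. Unset Printing Implicit Defensive.
Import Order.TTheory GRing.Theory.
Local Open Scope ring_scope.

Section CompleteHomogeneous.
Variables (F : fieldType) (I : eqType) (x : I -> F).

Fixpoint hsum (s : seq I) (n : nat) : F :=
  if s is i :: s' then \sum_(j < n.+1) x i ^+ j * hsum s' (n - j) else (n == 0)%:R.

Lemma hsum0 s : hsum s 0 = 1.
Proof.
by elim: s => [|i s IHs] //=; rewrite big_ord1 /= expr0 mul1r subn0 IHs.
Qed.

Lemma hsumS i s n : hsum (i :: s) n.+1 = x i * hsum (i :: s) n + hsum s n.+1.
Proof.
rewrite /= big_ord_recl /= expr0 mul1r subn0 addrC big_distrr /=; congr (_ + _).
by apply: eq_bigr => j _; rewrite subSS exprS mulrA.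
Qed.

Lemma coef_prod_geom s B n : (n < B)%N ->
  (\prod_(i <- s) \poly_(j < B) x i ^+ j)`_n = hsum s n.
Proof.
elim: s n => [|i s IHs] n ltnB; first by rewrite big_nil coef1.
rewrite big_cons coefM; apply: eq_bigr => j _.
by rewrite coef_poly (leq_ltn_trans (leq_ord j) ltnB) IHs // (leq_ltn_trans (leq_subr _ _)).
Qed.

(* The coefficients c_i of 1/prod_i (1 - x_i t) = sum_i c_i/(1 - x_i t),
   paired with their index; the first one is determined by sum_i c_i = 1. *)
Fixpoint pfrac (s : seq I) : seq (I * F) :=
  if s is i :: s' then
    let L := [seq (p.1, p.2 * x p.1 / (x p.1 - x i)) | p <- pfrac s'] in
    (i, 1 - \sum_(p <- L) p.2) :: L
  else [::].

Definition hsumz (s : seq I) (n : int) : F := \sum_(p <- pfrac s) p.2 * x p.1 ^ n.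

Lemma pfrac_fst (s : seq I) : map fst (pfrac s) = s.
Proof.
by elim: s => [|i s IHs] //=; rewrite -map_comp -[in RHS]IHs.
Qed.

Lemma hsumz_nil n : hsumz [::] n = 0.
Proof. exact: big_nil. Qed.

Lemma hsumz0 s : s != [::] -> hsumz s 0 = 1.
Proof.
case: s => [//|i s] _; rewrite /hsumz /= big_cons big_map /= expr0z mulr1.
by under [X in _ + X]eq_bigr do rewrite expr0z mulr1; rewrite big_map subrK.
Qed.

(* Hypotheses [uniq (0 :: map x s)] say that the x i, i in s, are distinct and nonzero. *)
Lemma uniq0_cons i s : uniq (0 :: map x (i :: s)) ->
  [/\ x i != 0, x i \notin map x s & uniq (0 :: map x s)].
Proof.
by rewrite /= !in_cons negb_or eq_sym => /andP[/andP[-> ->] /andP[-> ->]].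
Qed.

Lemma hsumzS i s n : uniq (0 :: map x (i :: s)) ->
  hsumz (i :: s) (n + 1) = x i * hsumz (i :: s) n + hsumz s (n + 1).
Proof.
case/uniq0_cons => xi_neq0 xi_s /andP[s_neq0 _].
rewrite /hsumz /= !big_cons !big_map /= mulrDr -addrA.
have xi_unit : x i \is a GRing.unit by rewrite unitfE.
congr (_ + _); first by rewrite exprzDr // expr1z; ring.
rewrite big_distrr -big_split /=.
rewrite -(pfrac_fst s) in xi_s s_neq0; apply: eq_big_seq => p p_in.
have xp_unit : x p.1 \is a GRing.unit.
  by rewrite unitfE; apply: contraNneq s_neq0 => <-; rewrite -map_comp map_f.
have xp_neq : x p.1 - x i != 0.
  by rewrite subr_eq0; apply: contraNneq xi_s => <-; rewrite -map_comp map_f.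
by rewrite exprzDr // expr1z; field.
Qed.

Lemma hsumz_hsum s (n : nat) : uniq (0 :: map x s) -> s != [::] -> hsumz s n = hsum s n.
Proof.
elim: s n => [//|i s IHs] n us _; have [_ _ us'] := uniq0_cons us.
have hsumz_hsum_tail m : hsumz s m.+1 = hsum s m.+1.
  by have [->|s_neq] := eqVneq s [::]; rewrite ?hsumz_nil ?IHs.
elim: n => [|n IHn]; first by rewrite hsumz0 ?hsum0.
by rewrite -[n.+1]addn1 PoszD hsumzS // -PoszD addn1 IHn hsumz_hsum_tail hsumS.
Qed.

Lemma hsumz_negS i s m : uniq (0 :: map x (i :: s)) ->
  hsumz (i :: s) (- m.+1%:Z) = (hsumz (i :: s) (- m%:Z) - hsumz s (- m%:Z)) / x i.
Proof.
move=> us; have [xi_neq0 _ _] := uniq0_cons us.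
have -> : - m%:Z = - m.+1%:Z + 1 by rewrite intS opprD addrAC addNr add0r.
by rewrite hsumzS // addrK mulrC mulKf.
Qed.

Lemma hsumz_neg s m : uniq (0 :: map x s) -> (0 < m < size s)%N -> hsumz s (- m%:Z) = 0.
Proof.
elim: s m => [|i s IHs] m us; first by rewrite andbF.
have [_ _ us'] := uniq0_cons us.
case: m => [//|m]; elim: m => [|m IHm] /andP[_ m_lt]; rewrite hsumz_negS //.
  by rewrite oppr0 !hsumz0 ?subrr ?mul0r // -size_eq0 -lt0n.
by rewrite IHm ?IHs ?subrr ?mul0r //= ltnW.
Qed.

Lemma hsumz_neg_size s : uniq (0 :: map x s) -> s != [::] ->
  hsumz s (- (size s)%:Z) = (-1) ^+ (size s).-1 / \prod_(i <- s) x i.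
Proof.
elim: s => [//|i s IHs] us _; have [xi_neq0 _ us'] := uniq0_cons us.
rewrite [size _]/= hsumz_negS // big_cons.
have [->|s_neq] := eqVneq s [::].
  by rewrite oppr0 hsumz0 // hsumz_nil big_nil subr0 expr0 mulr1 !div1r.
have s_gt0 : (0 < size s)%N by rewrite lt0n size_eq0.
rewrite (@hsumz_neg (i :: s)) ?s_gt0 ?ltnSn // IHs // -[in RHS](prednK s_gt0) exprS invfM; ring.
Qed.

Lemma hsumz_neg_size1 s : uniq (0 :: map x s) -> s != [::] ->
  hsumz s (- (size s).+1%:Z) =
    (-1) ^+ (size s).-1 / \prod_(i <- s) x i * \sum_(i <- s) (x i)^-1.
Proof.
elim: s => [//|i s IHs] us _; have [xi_neq0 _ us'] := uniq0_cons us.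
rewrite [size _]/= hsumz_negS // (hsumz_neg_size us) // !big_cons.
have [->|s_neq] := eqVneq s [::].
  by rewrite hsumz_nil !big_nil /=; field.
have s_gt0 : (0 < size s)%N by rewrite lt0n size_eq0.
rewrite IHs // /= -(prednK s_gt0) exprS !invfM; ring.
Qed.

End CompleteHomogeneous.

Lemma coef_prod_poly (R : comNzRingType) k B (c : 'I_k -> nat -> R) n :
  (\prod_(i < k) \poly_(j < B) c i j)`_n =
  \sum_(m : k.-tuple 'I_B | \sum_(i < k) (tnth m i : nat) == n)
     \prod_(i < k) c i (tnth m i).
Proof.
under eq_bigr do rewrite poly_def.
rewrite bigA_distr_bigA /= coef_sum [RHS]big_mkcond /=.
rewrite (reindex (fun m : k.-tuple 'I_B => [ffun i => tnth m i])) /=; last first.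
  exists (fun f : {ffun 'I_k -> 'I_B} => [tuple f i | i < k]) => [m _|f _].
    by apply: eq_from_tnth => i; rewrite tnth_mktuple ffunE.
  by apply/ffunP => i; rewrite ffunE tnth_mktuple.
apply: eq_bigr => m _; under eq_bigr do rewrite ffunE -mul_polyC.
rewrite big_split /= -rmorph_prod prodrXr coefCM coefXn eq_sym.
by case: eqP; rewrite ?mulr1 ?mulr0.
Qed.

Local Notation qpow := (GRing.exp qv).

Lemma qv_neq0 : qv != 0.
Proof. by rewrite tofrac_eq0 polyX_eq0. Qed.

Lemma qpow_inj : injective qpow.
Proof.
move=> i j /eqP; rewrite /qv -!rmorphXn /= tofrac_eq => /eqP eq_ij.
by have := congr1 (fun p : {poly rat} => size p) eq_ij; rewrite !size_polyXn => -[].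
Qed.

Lemma qv_sub1_neq0 : qv - 1 != 0.
Proof. by rewrite subr_eq0 -{1}(expr1 qv) -(expr0 qv) (inj_eq qpow_inj). Qed.

Lemma qintE n : 1 + (qv - 1) * qint n = qv ^+ n.
Proof. by rewrite /qint mulrC mulfVK ?qv_sub1_neq0 // addrC subrK. Qed.

Lemma qint_inj : injective qint.
Proof.
by move=> i j eq_ij; apply: qpow_inj; rewrite -!qintE eq_ij.
Qed.

Lemma uniq0_qpow a : uniq a -> uniq (0 :: map qpow a).
Proof.
move=> ua; rewrite /= (map_inj_uniq qpow_inj) ua andbT.
by apply/negP => /mapP[i _ /eqP]; rewrite eq_sym expf_eq0 (negPf qv_neq0) andbF.
Qed.

Lemma Esum_hsum a n : Esum a n = hsum qpow a n.
Proof.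
rewrite -(coef_prod_geom _ _ (ltnSn n)) (big_nth 0%N) big_mkord coef_prod_poly.
by apply: eq_bigr => m _; rewrite -prodrXr; apply: eq_bigr => i _; rewrite exprM.
Qed.

Lemma eq_poly_qint (p r : {poly Qq}) : (forall n, p.[qint n] = r.[qint n]) -> p = r.
Proof.
move=> eq_pr; apply/subr0_eq/(@roots_geq_poly_eq0 _ _ (map qint (iota 0 (size (p - r))))).
- by apply/allP => _ /mapP[n _ ->]; rewrite /root !hornerE eq_pr subrr.
- by rewrite (map_inj_uniq qint_inj) iota_uniq.
- by rewrite size_map size_iota.
Qed.

Lemma E_spec_eq a p : E_spec a p -> E a = p.
Proof.
move=> Ep; have EEa : E_spec a (E a) by apply: epsilon_spec; exists p.
by apply: eq_poly_qint => n; rewrite EEa Ep.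
Qed.

Lemma E_pfrac a : uniq a -> a != [::] ->
  E a = \sum_(p <- pfrac qpow a) p.2 *: (1 + (qv - 1) *: 'X) ^+ p.1.
Proof.
move=> ua a_neq; apply: E_spec_eq => n.
rewrite Esum_hsum -hsumz_hsum ?uniq0_qpow // horner_sum; apply: eq_bigr => p _.
by rewrite hornerZ horner_exp hornerD hornerC hornerZ hornerX qintE -exprAC.
Qed.

Lemma qint_shift0 k : 1 + (qv - 1) * ((qint 0 - qint k) * qv ^- k) = qv^-1 ^+ k.
Proof.
have qk_neq0 : qv ^+ k != 0 by rewrite expf_neq0 ?qv_neq0.
have qintk : (qv - 1) * qint k = qv ^+ k - 1 by rewrite -qintE addrAC subrr add0r.
have qint0 : qint 0 = 0 by rewrite /qint expr0 subrr mul0r.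
by rewrite qint0 sub0r mulNr mulrN mulrA qintk mulrBl divff // mul1r subKr exprVn.
Qed.

Lemma horner_affine (R : comNzRingType) (c d x : R) :
  (('X - c%:P) * d%:P).[x] = (x - c) * d.
Proof. by rewrite hornerM hornerD hornerN hornerX !hornerC. Qed.

Lemma E_term_at_qint0 a k : uniq a -> a != [::] -> size a = k ->
  (qv ^+ (\sum_(i <- a) i) *:
     (E a \Po (('X - (qint k.+1)%:P) * (qv ^- k.+1)%:P))).[qint 0]
  = (-1) ^+ k.-1 * \sum_(i <- a) qv^-1 ^+ i.
Proof.
move=> ua a_neq <-.
rewrite hornerZ horner_comp horner_affine E_pfrac // horner_sum.
have -> : \sum_(p <- pfrac qpow a)
      (p.2 *: (1 + (qv - 1) *: 'X) ^+ p.1).[(qint 0 - qint (size a).+1) / qpow (size a).+1]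
    = hsumz qpow a (- (size a).+1%:Z).
  apply: eq_bigr => p _.
  rewrite hornerZ horner_exp hornerD hornerC hornerZ hornerX qint_shift0.
  by rewrite -exprz_inv /= exprAC exprVn.
rewrite (hsumz_neg_size1 (uniq0_qpow ua) a_neq) prodrXr mulrA mulrCA divff ?mulr1.
  by under [in RHS]eq_bigr do rewrite exprVn.
by rewrite expf_neq0 ?qv_neq0.
Qed.

Lemma sum_alt_telescope (R : pzRingType) (f : nat -> R) n :
  \sum_(0 <= i < n) (-1) ^+ i * (f i.+1 + f i) = f 0%N - (-1) ^+ n * f n.
Proof.
rewrite (@telescope_sumr_eq _ 0 n (fun i => - ((-1) ^+ i * f i))) //.
  by rewrite expr0 mul1r opprK addrC.
by move=> i _; rewrite exprS mulN1r mulNr !opprK mulrDr addrC.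
Qed.

Section Chains.
Variables (d : Order.disp_t) (P : finPOrderType d).
Implicit Types A B : {pred P}.

Lemma Ch0 A : Ch A 0 = [set [tuple]].
Proof. by apply/setP => t; rewrite !inE [t]tuple0 eqxx. Qed.

Lemma Ch_gt_card A k : (#|A| < k)%N -> Ch A k = set0.
Proof.
move=> A_lt; apply/setP => t; rewrite !inE; apply/negP => /andP[t_sorted t_A].
have t_sub : {subset t <= enum A} by move=> x x_t; rewrite mem_enum; exact: (allP t_A).
have := uniq_leq_size (lt_sorted_uniq t_sorted) t_sub.
by rewrite size_tuple -cardE leqNgt A_lt.
Qed.

Lemma card_Ch_dual A k : #|Ch (P := P^d) A k| = #|Ch A k|.
Proof.
have revK : involutive (@rev_tuple k P) by move=> t; apply: val_inj; rewrite /= revK.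
rewrite -(card_imset _ (inv_inj revK)) (can2_imset_pre _ revK revK).
by apply: eq_card => t; rewrite !inE /= rev_sorted all_rev.
Qed.

Lemma chi_dual A : chi (P := P^d) A = chi A.
Proof. by apply: eq_bigr => k _; rewrite card_Ch_dual. Qed.

Section Cone.
Variables (B B' : {pred P}) (m : P).
Hypotheses (mB : m \in B) (m_min : forall x, x \in B -> (m <= x)%O).
Hypothesis B'E : forall x, (x \in B') = (x \in B) && (x != m).

Lemma all_cone t : all (mem B') t = all (mem B) t && (m \notin t).
Proof.
have -> : all (mem B') t = all (predI (mem B) (predC1 m)) t by apply: eq_all => x; exact: B'E.
by rewrite all_predI all_predC has_pred1.
Qed.

Lemma Ch_cone_notin k (t : k.-tuple P) : (t \in Ch B k) && (m \notin t) = (t \in Ch B' k).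
Proof. by rewrite !inE all_cone andbA. Qed.

Lemma Ch_cone_cons k (t : k.-tuple P) : (cons_tuple m t \in Ch B k.+1) = (t \in Ch B' k).
Proof.
rewrite !inE /= lt_path_sortedE all_cone mB /=.
have [t_B|] := boolP (all (mem B) t); last by rewrite !andbF.
have -> : all (> m)%O t = (m \notin t).
  rewrite -has_pred1 -all_predC; apply: eq_in_all => x x_t /=.
  by rewrite lt_def eq_sym m_min ?andbT //; exact: (allP t_B).
by rewrite andbT andbC.
Qed.

Lemma Ch_cone_head k (t : k.+1.-tuple P) : t \in Ch B k.+1 -> m \in t -> thead t = m.
Proof.
case: t => -[//|x s] /= size_t; rewrite inE /= lt_path_sortedE => /andP[/andP[x_lt _]].
rewrite /thead (tnth_nth x) /= => /andP[x_B _]; rewrite in_cons => /orP[/eqP //|m_s].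
by have := lt_le_trans (allP x_lt m m_s) (m_min x_B); rewrite ltxx.
Qed.

Lemma big_Ch_cone k (F : k.+1.-tuple P -> Qq) :
  \sum_(t in Ch B k.+1) F t =
  \sum_(t in Ch B' k.+1) F t + \sum_(t in Ch B' k) F (cons_tuple m t).
Proof.
rewrite (bigID (fun t => m \in t)) /= addrC; congr (_ + _).
  by apply: eq_bigl => t; rewrite Ch_cone_notin.
rewrite (reindex_onto (@cons_tuple k P m) (@behead_tuple k.+1 P)) /=.
  apply: eq_bigl => t; have -> : behead_tuple (cons_tuple m t) == t by apply/eqP/val_inj.
  by rewrite Ch_cone_cons mem_head !andbT.
move=> t /andP[t_ch m_t]; rewrite [in RHS](tuple_eta t) (Ch_cone_head t_ch m_t).
by apply: val_inj.
Qed.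

Lemma card_cone_lt : (#|B'| < #|P|)%N.
Proof.
rewrite -(cardC B') -{1}[#|B'|]addn0 ltn_add2l; apply/card_gt0P.
by exists m; rewrite inE B'E eqxx andbF.
Qed.

Lemma alt_sum_Ch_cone (phi : seq P -> Qq) (a : Qq) : (forall t, phi (m :: t) = a + phi t) ->
  \sum_(1 <= k < #|P|.+1) (-1) ^+ k.-1 * \sum_(c in Ch B k) phi c =
  phi [::] + a * (1 - chi B').
Proof.
move=> phi_cons; pose W k := \sum_(c in Ch B' k) phi c; pose N k := (#|Ch B' k|%:R : Qq).
have Ch_top : Ch B' #|P| = set0 := Ch_gt_card card_cone_lt.
have alt_N : \sum_(0 <= k < #|P|) (-1) ^+ k * N k = 1 - chi B'.
  apply/eqP; rewrite eq_sym subr_eq /chi big_add1 succnK -big_split /=; apply/eqP.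
  under eq_bigr do rewrite -mulrDr addrC.
  by rewrite sum_alt_telescope /N Ch0 Ch_top cards1 cards0 mulr0 subr0.
have W_split k : \sum_(c in Ch B k.+1) phi c = W k.+1 + W k + a * N k.
  rewrite big_Ch_cone; under [X in _ + X]eq_bigr do rewrite phi_cons.
  by rewrite big_split /= sumr_const -mulr_natr [a * _ + _]addrC addrA.
rewrite big_add1 succnK; under eq_bigr do rewrite W_split mulrDr mulrCA.
rewrite big_split /= sum_alt_telescope -big_distrr alt_N /W Ch0 Ch_top big_set1 big_set0.
by rewrite mulr0 subr0.
Qed.

Lemma chi_cone : chi B = 1.
Proof.
have := @alt_sum_Ch_cone (fun _ => 1) 0 (fun _ => esym (add0r 1)).
rewrite mul0r addr0 => <-; by apply: eq_bigr => k _; rewrite sumr_const.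
Qed.

End Cone.

End Chains.

Section Height.
Variables (d : Order.disp_t) (P : finPOrderType d) (h : P -> nat).
Hypothesis h_height : height_fun h.

Lemma height_fun_lt x y : (x < y)%O -> (h x < h y)%N.
Proof.
suff: forall n x y, (#|[pred w | (x < w < y)%O]| < n)%N -> (x < y)%O -> (h x < h y)%N.
  by apply.
elim=> [//|n IHn] {}x {}y itv_lt x_lt_y.
have [/h_height //|] := boolP (covers x y).
rewrite /covers x_lt_y negb_forall => /existsP[w /negPn /andP[x_lt_w w_lt_y]].
have shrink u v : (x <= u)%O -> (v <= y)%O -> ~~ (u < w < v)%O ->
    (#|[pred t | (u < t < v)%O]| < n)%N.
  move=> x_le_u v_le_y w_out; rewrite -ltnS; apply: leq_trans itv_lt; apply: proper_card.
  apply/properP; split; last by exists w; rewrite !inE ?x_lt_w.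
  apply/subsetP => t; rewrite !inE => /andP[u_lt_t t_lt_v].
  by rewrite (le_lt_trans x_le_u u_lt_t) (lt_le_trans t_lt_v v_le_y).
apply: ltn_trans (IHn x w _ x_lt_w) (IHn w y _ w_lt_y).
  by apply: shrink; rewrite ?lexx ?ltW ?ltxx ?andbF.
by apply: shrink; rewrite ?lexx ?ltW ?ltxx.
Qed.

Lemma height_chain_uniq k (c : k.-tuple P) : c \in Ch predT k -> uniq (map h c).
Proof.
rewrite inE => /andP[c_sorted _]; apply: (sorted_uniq ltn_trans ltnn).
by rewrite sorted_map; apply: sub_sorted c_sorted => x y /height_fun_lt.
Qed.

Lemma Zpoly_at_qint0 : (Zpoly h).[qint 0] =
  \sum_(1 <= k < #|P|.+1) (-1) ^+ k.-1 * \sum_(c in Ch predT k) \sum_(x <- c) qv^-1 ^+ h x.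
Proof.
rewrite horner_sum; apply: eq_big_nat => k /andP[k_gt0 _].
rewrite horner_sum big_distrr; apply: eq_bigr => c c_chain /=.
have hc_neq : map h c != [::] by rewrite -size_eq0 size_map size_tuple -lt0n.
rewrite -(big_map h predT id) E_term_at_qint0 ?height_chain_uniq ?size_map ?size_tuple //.
by rewrite big_map.
Qed.

End Height.

Theorem mainTheorem13 (d : Order.disp_t) (P : finPOrderType d) (h : P -> nat)
  (hh : height_fun h) (z : P) (hz : forall x : P, (z <= x)%O) :
  (Zpoly h).[qint 0] = qv ^- (h z) * (1 - chi (fun x : P => x != z))
  /\ (forall o : P, (forall x : P, (x <= o)%O) -> o != z -> (Zpoly h).[qint 0] = 0).
Proof.
have Z_at0 : (Zpoly h).[qint 0] = qv ^- (h z) * (1 - chi (fun x : P => x != z)).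
  pose phi (c : seq P) := \sum_(x <- c) qv^-1 ^+ h x.
  rewrite Zpoly_at_qint0 //.
  rewrite (@alt_sum_Ch_cone _ _ predT (fun x => x != z) z _ _ _ phi (qv^-1 ^+ h z)) //.
  - by rewrite /phi big_nil add0r exprVn.
  - by move=> t; rewrite /phi big_cons.
split=> // o o_max o_neq_z.
rewrite Z_at0 -chi_dual (@chi_cone _ P^d _ [pred x | (x != z) && (x != o)] o) ?subrr ?mulr0 //.
by move=> x _; exact: o_max.
Qed.
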